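(* Let $G=(G_1,G_2,G_3)$ be a mean zero Gaussian vector whose covariance matrix $\Gamma$ is strictly positive definite and irreducible, with $\Gamma^{-1}$ an $M$-matrix, and suppose $\Gamma_{i,j}\le\Gamma_{i,i}\wedge\Gamma_{j,j}$ for all $i,j$. Let $D_i=\sum_k(\Gamma^{-1})_{i,k}$ and $\mathcal D=\{(i,j):D_iD_j<0\}$. Then the upper bound for the critical point of $G$ is non-zero: if $\mathcal D\neq\emptyset$, then $\inf_{(i,j)\in\mathcal D}\big((\Gamma^{-1})_{i,j}/(2D_iD_j)\big)^{1/2}>0$; equivalently, there is no $(i,j)\in\mathcal D$ with $(\Gamma^{-1})_{i,j}=0$. *)

From mathcomp Require Import all_boot all_order all_algebra.
From mathcomp Require Import reals.
Set Implicit Arguments. Unset Strict Implicit. Unset Printing Implicit Defensive.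
Import Order.TTheory GRing.Theory Num.Theory.
Local Open Scope ring_scope.

Section Defs.
Variable R : realFieldType.

Definition posdef_mx n (A : 'M[R]_n) : Prop :=
  A^T = A /\ forall v : 'rV[R]_n, v != 0 -> 0 < (v *m A *m v^T) 0 0.

Definition irreducible_mx n (A : 'M[R]_n) : Prop :=
  forall S : {set 'I_n}, S != set0 -> S != setT ->
    exists i j, [/\ i \in S, j \notin S & A i j != 0].

Definition Mmatrix n (A : 'M[R]_n) : Prop :=
  [/\ A \in unitmx,
      (forall i j, i != j -> A i j <= 0)
    & (forall i j, 0 <= (invmx A) i j)].

Definition rowsum n (A : 'M[R]_n) (i : 'I_n) : R := \sum_(k < n) A i k.
End Defs.

From mathcomp Require Import all_boot all_order all_algebra.
From mathcomp Require Import reals.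
From mathcomp Require Import lra.
Set Implicit Arguments. Unset Strict Implicit. Unset Printing Implicit Defensive.
Import Order.TTheory GRing.Theory Num.Theory.
Local Open Scope ring_scope.

(* Write A = Gamma^-1, so that A Gamma = 1, A is symmetric with nonpositive
   off-diagonal entries and Gamma >= 0. If A_ij = 0 for i <> j and k is the
   third index, row i of A is supported on {i, k}, and the (i, k) entry of
   A Gamma = 1 gives Gamma_kk D_i = A_ii (Gamma_kk - Gamma_ik) >= 0; likewise
   D_j >= 0, so (i, j) is not in the set D. Hence A_ij < 0 on D, so every
   ratio in the (finite) infimum is positive. *)

Lemma exists_pos_lbound (R : realDomainType) (T : finType) (P : pred T)
    (f : T -> R) :
  (forall x, P x -> 0 < f x) -> exists2 c, 0 < c & forall x, P x -> c <= f x.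
Proof.
move=> f_gt0; exists (\big[Order.min/1]_(x | P x) f x).
  by apply/Order.TotalTheory.bigmin_gtP.
by move=> x Px; apply: Order.TotalTheory.bigmin_le_cond.
Qed.

Lemma sum_on_pair (R : nmodType) n (F : 'I_n -> R) (i k : 'I_n) :
  i != k -> (forall m, m != i -> m != k -> F m = 0) ->
  \sum_m F m = F i + F k.
Proof.
move=> nik F0; rewrite (bigD1 i) // (bigD1 k) 1?eq_sym //= big1 ?addr0 //.
by move=> m /andP[mi mk]; apply: F0.
Qed.

Section InverseOfMmatrix.
Variables (R : realFieldType) (n : nat) (A G : 'M[R]_n).
Hypotheses (AG : A *m G = 1%:M) (A_offdiag_le0 : forall i j, i != j -> A i j <= 0)
  (G_ge0 : forall i j, 0 <= G i j).

Lemma diag_mul_ge1 i : 1 <= A i i * G i i.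
Proof.
have : (A *m G) i i = 1 by rewrite AG mxE eqxx.
rewrite mxE (bigD1 i) //= => /(canRL (addrK _)) ->.
rewrite lerDl oppr_ge0 sumr_le0 // => m mi.
by rewrite mulr_le0_ge0 // A_offdiag_le0 // eq_sym.
Qed.

Lemma diag_gt0_left i : 0 < A i i.
Proof.
have := diag_mul_ge1 i; apply: contraTT; rewrite -leNgt => Aii_le0.
by rewrite -ltNge (le_lt_trans (mulr_le0_ge0 Aii_le0 (G_ge0 i i))) ?ltr01.
Qed.

Lemma diag_gt0_right i : 0 < G i i.
Proof.
rewrite lt_def G_ge0 andbT; apply: contraTneq (diag_mul_ge1 i) => ->.
by rewrite mulr0 ler10.
Qed.

Lemma rowsum_ge0_of_pair_support i k :
  i != k -> (forall m, m != i -> m != k -> A i m = 0) -> G i k <= G k k ->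
  0 <= rowsum A i.
Proof.
move=> nik row_i Gik_le.
have Dik : rowsum A i = A i i + A i k by apply: sum_on_pair.
have AGik : A i i * G i k + A i k * G k k = 0.
  have : (A *m G) i k = 0 by rewrite AG mxE (negbTE nik).
  rewrite mxE (sum_on_pair nik) // => m mi mk.
  by rewrite row_i // mul0r.
have key : G k k * rowsum A i = A i i * (G k k - G i k).
  by rewrite Dik mulrBr mulrDr; lra.
rewrite -(pmulr_rge0 _ (diag_gt0_right k)) key.
by rewrite mulr_ge0 ?subr_ge0 // ltW // diag_gt0_left.
Qed.

End InverseOfMmatrix.

Lemma ord3_third (i j : 'I_3) : exists2 k : 'I_3, i != k & j != k.
Proof.
case: (pickP [pred k | (k != i) && (k != j)]) => [k /andP[ki kj] | none].
  by exists k; rewrite eq_sym.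
have : (#|'I_3| <= #|[set i; j]|)%N.
  apply/subset_leq_card/subsetP => k _.
  by move/negbT: (none k); rewrite !inE negb_and !negbK.
by rewrite card_ord cards2; case: (i != j).
Qed.

Lemma ord3_other (i j k m : 'I_3) :
  i != j -> i != k -> j != k -> m != i -> m != k -> m = j.
Proof.
by case: i j k m => [[|[|[|?]]] ?] [[|[|[|?]]] ?] [[|[|[|?]]] ?] [[|[|[|?]]] ?] //= *; apply/val_inj.
Qed.

Lemma rowsum_mul_ge0_of_offdiag_eq0 (R : realFieldType) (A G : 'M[R]_3) i j :
  A *m G = 1%:M -> A^T = A -> (forall a b, a != b -> A a b <= 0) ->
  (forall a b, 0 <= G a b) -> (forall a b, G a b <= G b b) ->
  i != j -> A i j = 0 -> 0 <= rowsum A i * rowsum A j.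
Proof.
move=> AG AT offA G_ge0 G_le_diag ij Aij.
have [k ik jk] := ord3_third i j.
have Aji : A j i = 0 by rewrite -[A]AT mxE.
apply: mulr_ge0.
- apply: (rowsum_ge0_of_pair_support AG offA G_ge0 ik _ (G_le_diag i k)).
  by move=> m mi mk; rewrite (ord3_other ij ik jk mi mk).
- apply: (rowsum_ge0_of_pair_support AG offA G_ge0 jk _ (G_le_diag j k)).
  rewrite eq_sym in ij.
  by move=> m mj mk; rewrite (ord3_other ij jk ik mj mk).
Qed.

Theorem corollary7p1 (R : realType) (Gamma : 'M[R]_3) :
  posdef_mx Gamma ->
  irreducible_mx Gamma ->
  Mmatrix (invmx Gamma) ->
  (forall i j, Gamma i j <= Num.min (Gamma i i) (Gamma j j)) ->
  exists2 c : R, 0 < c &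
    forall i j : 'I_3,
      rowsum (invmx Gamma) i * rowsum (invmx Gamma) j < 0 ->
      c <= Num.sqrt ((invmx Gamma) i j /
                     (2 * (rowsum (invmx Gamma) i * rowsum (invmx Gamma) j))).
Proof.
move=> [GammaT _] _ [Au offA invA_ge0] Gamma_le_min.
have Gu : Gamma \in unitmx by rewrite -unitmx_inv.
set A := invmx Gamma in Au offA invA_ge0 *.
have Gamma_ge0 : forall i j, 0 <= Gamma i j by rewrite /A invmxK in invA_ge0.
have AG : A *m Gamma = 1%:M := mulVmx Gu.
have AT : A^T = A by rewrite /A trmx_inv GammaT.
have Gamma_le_diag i j : Gamma i j <= Gamma j j.
  by have := Gamma_le_min i j; rewrite le_min => /andP[].
have /exists_pos_lbound[c c_gt0 c_le] : forall p : 'I_3 * 'I_3,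
    rowsum A p.1 * rowsum A p.2 < 0 ->
    0 < Num.sqrt (A p.1 p.2 / (2 * (rowsum A p.1 * rowsum A p.2))).
  move=> [a b] /= D_ab_lt0; rewrite sqrtr_gt0.
  have ab : a != b by apply: contraTneq D_ab_lt0 => ->; rewrite -leNgt -expr2 sqr_ge0.
  have Aab_lt0 : A a b < 0.
    rewrite lt_neqAle offA // andbT; apply: contraTneq D_ab_lt0 => Aab.
    by rewrite -leNgt (rowsum_mul_ge0_of_offdiag_eq0 AG AT offA Gamma_ge0 Gamma_le_diag ab Aab).
  by rewrite -mulrNN -invrN divr_gt0 ?oppr_gt0 // pmulr_rlt0.
by exists c => // i j; apply: (c_le (i, j)).
Qed.
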